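(* Let $f\in\mathrm{Rat}_d(\mathbb{C}_v)$, $d\ge 2$, satisfy $|f(x)|>1$ for every $x\in\mathbb{C}_v$ with $|x|>1$. Then for every $\gamma>0$ there is an open subset $W\subseteq\mathrm{Rat}_d(\mathbb{C}_v)$ containing $f$ such that every $g\in W$ satisfies (a) $|g(x)|>1$ for all $x\in\mathbb{C}_v$ with $|x|>1$, and (b) $|g(x)-f(x)|<\gamma$ for all $x\in\mathbb{C}_v$ with $|f(x)|\le1$.
   Context: $\mathbb{C}_v$ is an algebraically closed field of characteristic zero, complete with respect to a nontrivial non-archimedean absolute value. $\mathrm{Rat}_d(\mathbb{C}_v)$ is the set of rational functions of degree exactly $d$ (degree of $F/G$ with $F,G$ coprime polynomials being $\max\{\deg F,\deg G\}$), topologized via the inclusion into $\mathbb{P}^{2d+1}(\mathbb{C}_v)$ sending $f$ to its tuple of $2d+2$ coefficients. *)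

(* an abstract model of C_v. *)
From HB Require Import structures.
From mathcomp Require Import all_boot all_order all_algebra.
From mathcomp Require Import reals.
Set Implicit Arguments. Unset Strict Implicit. Unset Printing Implicit Defensive.
Import Order.TTheory GRing.Theory Num.Theory.
Local Open Scope ring_scope.

Record complete_nonarch_abs (R : realType) (K : fieldType) (a : K -> R) : Prop := {
  abs_ge0 : forall x, 0 <= a x;
  abs_eq0 : forall x, a x = 0 <-> x = 0;
  abs_mul : forall x y, a (x * y) = a x * a y;
  abs_ultra : forall x y, a (x + y) <= Num.max (a x) (a y);
  abs_nontrivial : exists x, a x != 0 /\ a x != 1;
  abs_complete : forall u : nat -> K,
    (forall e : R, 0 < e -> exists N, forall m n, (N <= m)%N -> (N <= n)%N ->
        a (u m - u n) < e) ->
    exists l, forall e : R, 0 < e -> exists N, forall n, (N <= n)%N -> a (u n - l) < e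
}.

(* A rational function f = F/G is given by the pair (F, G) of polynomials,
   i.e. by its 2d+2 coefficients (a point of K^{2d+2} \ {0}).
   rat_deg d F G : F, G coprime and max(deg F, deg G) = d, i.e. f in Rat_d. *)
Definition rat_deg (K : fieldType) (d : nat) (F G : {poly K}) : Prop :=
  coprimep F G /\ maxn (size F) (size G) = d.+1.

(* |f(x)| > 1, with f(x) = infinity at a pole (G(x) = 0). *)
Definition rat_abs_gt1 (R : realType) (K : fieldType) (a : K -> R)
  (F G : {poly K}) (x : K) : Prop :=
  G.[x] = 0 \/ 1 < a (F.[x] / G.[x]).

Definition rat_abs_le1 (R : realType) (K : fieldType) (a : K -> R)
  (F G : {poly K}) (x : K) : Prop :=
  G.[x] != 0 /\ a (F.[x] / G.[x]) <= 1.

Definition rat_close (R : realType) (K : fieldType) (a : K -> R) (gamma : R)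
  (F G F' G' : {poly K}) (x : K) : Prop :=
  G'.[x] != 0 /\ a (F'.[x] / G'.[x] - F.[x] / G.[x]) < gamma.

(* W is (the preimage in K^{2d+2} \ {0} of) an open subset of P^{2d+1}(K):
   it is invariant under nonzero scaling of the coefficient vector, and it is
   open for the sup-norm topology on coefficient vectors of length 2d+2. *)
Definition proj_open (R : realType) (K : fieldType) (a : K -> R) (d : nat)
  (W : {poly K} -> {poly K} -> Prop) : Prop :=
  (forall (c : K) F G, c != 0 -> W F G -> W (c *: F) (c *: G)) /\
  (forall F G, W F G -> exists2 e : R, 0 < e &
     forall F' G' : {poly K}, (size F' <= d.+1)%N -> (size G' <= d.+1)%N ->
       (forall i : 'I_d.+1, a (F'`_i - F`_i) < e /\ a (G'`_i - G`_i) < e) ->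
       W F' G').

From HB Require Import structures.
From mathcomp Require Import all_boot all_order all_algebra.
From mathcomp Require Import reals.
From mathcomp Require Import ring lra zify.
Import Order.TTheory GRing.Theory Num.Theory.
Set Implicit Arguments. Unset Strict Implicit. Unset Printing Implicit Defensive.
Local Open Scope ring_scope.

(* Write f = F/G with F, G coprime of degree <= d, and assume |f(x)| > 1
   whenever |x| > 1.  Since a root z of F would give f(z) = 0, all roots of F
   lie in the closed unit disc, so |F(x)| = |lc F| |x|^deg F for |x| > 1; for
   the same reason |G(x)| < |F(x)| there, which forces deg G <= deg F = d.
   By Bezout (UF + VG = 1), |G| is bounded below by some m > 0 on the part of
   the unit disc where |F| <= |G|, i.e. where |f| <= 1.

   The open set W consists of the coefficient vectors which, after rescaling,
   are coefficientwise e-close to (F, G), with e < |lc F|, e < m, e <= gamma m.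
   For |x| > 1 the perturbation of F and G is below e |x|^d < |F(x)|, so the
   ultrametric "strongest wins" principle keeps |G'(x)| < |F'(x)|; on
   {|f| <= 1} the perturbation is below e < m <= |G(x)|, so the quotient moves
   by less than e/m <= gamma. *)

Lemma bernoulli (R : realFieldType) (h : R) n : 0 <= h -> 1 + n%:R * h <= (1 + h) ^+ n.
Proof.
move=> h0; elim: n => [|n IH]; first by rewrite mul0r addr0 expr0.
rewrite exprSr -natr1.
have n0 : 0 <= n%:R :> R by rewrite ler0n.
set X := (1 + h) ^+ n in IH *.
nra.
Qed.

Section NonArchimedean.
Variables (R : realType) (K : fieldType) (a : K -> R).
Hypothesis Ha : complete_nonarch_abs a.

Lemma a_ge0 x : 0 <= a x. Proof. exact: abs_ge0 Ha x. Qed.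

Lemma a0 : a 0 = 0. Proof. exact/(abs_eq0 Ha). Qed.

Lemma a_gt0 x : (0 < a x) = (x != 0).
Proof.
rewrite lt0r a_ge0 andbT; apply/idP/idP; apply: contra => /eqP.
  by move=> ->; rewrite a0.
by move/(abs_eq0 Ha)->.
Qed.

Lemma aM x y : a (x * y) = a x * a y. Proof. exact: abs_mul Ha x y. Qed.

Lemma a1 : a 1 = 1.
Proof.
have a1_neq0 : a 1 != 0 by rewrite gt_eqF // a_gt0 oner_neq0.
by apply: (mulfI a1_neq0); rewrite mulr1 -aM mulr1.
Qed.

Lemma aN x : a (- x) = a x.
Proof.
have aN1 : a (-1) = 1.
  apply/eqP; rewrite -sqrp_eq1 ?a_ge0 // expr2 -aM mulrNN mulr1 a1 //.
by rewrite -mulN1r aM aN1 mul1r.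
Qed.

Lemma aV x : a x^-1 = (a x)^-1.
Proof.
have [->|x0] := eqVneq x 0; first by rewrite invr0 a0 invr0.
have ax0 : a x != 0 by rewrite gt_eqF // a_gt0.
by apply: (mulfI ax0); rewrite -aM !divff ?a1.
Qed.

Lemma aX x n : a (x ^+ n) = a x ^+ n.
Proof. by elim: n => [|n IH]; rewrite ?a1 // !exprS aM IH. Qed.

Lemma aD_lt x y (B : R) : a x < B -> a y < B -> a (x + y) < B.
Proof. by move=> hx hy; apply: le_lt_trans (abs_ultra Ha x y) _; rewrite gt_max hx hy. Qed.

Lemma aD_le_sum x y : a (x + y) <= a x + a y.
Proof.
apply: le_trans (abs_ultra Ha x y) _.
by rewrite ge_max lerDl lerDr !a_ge0.
Qed.

Lemma abs_sum_lt (I : Type) (r : seq I) (P : pred I) (F : I -> K) (B : R) :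
  0 < B -> (forall i, P i -> a (F i) < B) -> a (\sum_(i <- r | P i) F i) < B.
Proof.
move=> B0 hF; apply: (big_ind (fun y => a y < B)) => //; first by rewrite a0.
by move=> x y; apply: aD_lt.
Qed.

Lemma abs_sum_le (I : Type) (r : seq I) (P : pred I) (F : I -> K) :
  a (\sum_(i <- r | P i) F i) <= \sum_(i <- r | P i) a (F i).
Proof.
apply: (big_ind2 (fun y z => a y <= z)) => [|x1 x2 y1 y2 h1 h2|//].
  by rewrite a0.
by apply: le_trans (aD_le_sum _ _) _; apply: lerD.
Qed.

Lemma a_isosceles x y : a y < a x -> a (x + y) = a x.
Proof.
move=> hyx; apply/eqP; rewrite eq_le; apply/andP; split.
  by apply: le_trans (abs_ultra Ha x y) _; rewrite ge_max lexx ltW.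
have := abs_ultra Ha (x + y) (- y); rewrite addrK aN.
by case: (leP (a (x + y)) (a y)) => // _ /(lt_le_trans hyx); rewrite ltxx.
Qed.

Lemma a_close_eq x y : a (y - x) < a x -> a y = a x.
Proof. by move/a_isosceles; rewrite addrC subrK. Qed.


(* A nontrivial absolute value exceeds 1 somewhere (at x or at 1/x). *)
Lemma exists_abs_gt1 : exists t, 1 < a t.
Proof.
have [x [ax_ne0 ax_ne1]] := abs_nontrivial Ha.
have x0 : x != 0 by rewrite -a_gt0 lt0r ax_ne0 a_ge0.
case: (ltrgtP 1 (a x)) => [|ax_lt1|ax_eq1]; first by exists x.
  by exists x^-1; rewrite aV invf_gt1 // a_gt0.
by rewrite ax_eq1 eqxx in ax_ne1.
Qed.

(* Hence, by Bernoulli's inequality, it takes arbitrarily large values. *)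
Lemma exists_abs_gt (B : R) : exists x, B < a x.
Proof.
have [t t1] := exists_abs_gt1.
set h := a t - 1; have h0 : 0 < h by rewrite subr_gt0.
set B' := Num.max B 0 / h.
have B'0 : 0 <= B' by rewrite divr_ge0 ?le_max ?lexx ?orbT ?ltW.
set n := Num.Def.archi_bound B'.
have nB' : B' * h < n%:R * h by rewrite ltr_pM2r ?archi_boundP.
have BB' : B <= B' * h by rewrite divfK ?gt_eqF // le_max lexx.
exists (t ^+ n); rewrite aX -[a t](subrK 1) -/h addrC.
by apply: lt_le_trans (bernoulli n (ltW h0)); lra.
Qed.

Lemma abs_horner_lt n (P : {poly K}) x (e r : R) :
  (size P <= n.+1)%N -> 1 <= r -> a x <= r ->
  (forall i : 'I_n.+1, a P`_i < e) -> a P.[x] < e * r ^+ n.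
Proof.
move=> szP r1 axr hP.
have e0 : 0 < e := le_lt_trans (a_ge0 _) (hP ord0).
have rn0 : 0 < r ^+ n := exprn_gt0 _ (lt_le_trans ltr01 r1).
rewrite (horner_coef_wide x szP); apply: abs_sum_lt => [|i _]; first exact: mulr_gt0.
have xi : a x ^+ i <= r ^+ n.
  apply: le_trans (ler_weXn2l r1 (_ : (i <= n)%N)); last by rewrite -ltnS.
  by apply: lerXn2r; rewrite ?nnegrE ?a_ge0 ?(le_trans (a_ge0 x) axr).
rewrite aM aX; apply: le_lt_trans (ler_wpM2l (a_ge0 _) xi) _.
by rewrite ltr_pM2r.
Qed.

Definition coef_norm (P : {poly K}) : R := \sum_(i < size P) a P`_i.

Lemma coef_norm_ge0 P : 0 <= coef_norm P.
Proof. by apply: sumr_ge0 => i _; exact: a_ge0. Qed.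

Lemma abs_horner_le_norm P x : a x <= 1 -> a P.[x] <= coef_norm P.
Proof.
move=> x1; rewrite horner_coef; apply: le_trans (abs_sum_le _ _ _) _.
apply: ler_sum => i _; rewrite aM aX.
by apply: ler_piMr; [exact: a_ge0 | exact: exprn_ile1 (a_ge0 _) x1].
Qed.

(* Bezout: two coprime polynomials cannot be simultaneously small on the closed
   unit disc.  This keeps the denominator of f away from 0 where |f| <= 1. *)
Lemma coprime_disc_lower_bound F G : coprimep F G ->
  exists2 m : R, 0 < m &
    forall x, a x <= 1 -> m <= Num.max (a F.[x]) (a G.[x]).
Proof.
move=> /Bezout_eq1_coprimepP [[U V] /= UV1].
set C := 1 + coef_norm U + coef_norm V.
have nU := coef_norm_ge0 U; have nV := coef_norm_ge0 V.
have C0 : 0 < C by rewrite /C; lra.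
exists C^-1 => [|x x1]; first by rewrite invr_gt0.
set M := Num.max _ _.
have M0 : 0 <= M by rewrite le_max a_ge0.
rewrite -[C^-1]mul1r ler_pdivrMr // mulrC -a1.
have /(congr1 (fun p => p.[x])) := UV1; rewrite hornerD !hornerM hornerC => <-.
apply: le_trans (abs_ultra Ha _ _) _; rewrite ge_max !aM.
apply/andP; split; apply: ler_pM; rewrite ?a_ge0 ?le_max ?lexx ?orbT //.
  by apply: le_trans (abs_horner_le_norm U x1) _; rewrite /C; lra.
by apply: le_trans (abs_horner_le_norm V x1) _; rewrite /C; lra.
Qed.

End NonArchimedean.

Section FarFromRoots.
Variables (R : realType) (K : closedFieldType) (a : K -> R).
Hypothesis Ha : complete_nonarch_abs a.

Lemma abs_prod_far (rs : seq K) x : (forall z, z \in rs -> a z < a x) ->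
  a (\prod_(z <- rs) (x - z)) = a x ^+ size rs.
Proof.
elim: rs => [|z rs IH] hrs; first by rewrite big_nil (a1 Ha).
rewrite big_cons (aM Ha) exprS IH => [|w wrs]; last by rewrite hrs // in_cons wrs orbT.
by rewrite (a_isosceles Ha) // (aN Ha) hrs ?mem_head.
Qed.

Lemma abs_horner_far (P : {poly K}) (rb : R) x : P != 0 ->
  (forall z, root P z -> a z <= rb) -> rb < a x ->
  a P.[x] = a (lead_coef P) * a x ^+ (size P).-1.
Proof.
move=> P0 hroots rbx; have [rs defP] := closed_field_poly_normal P.
have lc0 : lead_coef P != 0 by rewrite lead_coef_eq0.
have -> : (size P).-1 = size rs by rewrite defP size_scale // size_prod_XsubC.
rewrite {1}defP hornerZ horner_prod (aM Ha).
under eq_bigr do rewrite hornerXsubC.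
rewrite abs_prod_far // => z zrs; apply: le_lt_trans rbx; apply: hroots.
by rewrite defP rootZ // root_prod_XsubC.
Qed.

Lemma roots_bounded (P : {poly K}) :
  P != 0 -> exists rb : R, forall z, root P z -> a z <= rb.
Proof.
move=> P0; have [rs defP] := closed_field_poly_normal P.
exists (\sum_(z <- rs) a z) => z.
rewrite defP rootZ ?lead_coef_eq0 // root_prod_XsubC => zrs.
by rewrite (big_rem z) //= lerDl sumr_ge0 // => w _; exact: a_ge0.
Qed.

End FarFromRoots.

Section Escape.
Variables (R : realType) (K : closedFieldType) (a : K -> R).
Hypothesis Ha : complete_nonarch_abs a.
Variables F G : {poly K}.
Hypothesis FG_coprime : coprimep F G.
Hypothesis escape : forall x, 1 < a x -> rat_abs_gt1 a F G x.

(* At a root of F, f vanishes, so it cannot escape: F has no root off the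
   closed unit disc. *)
Lemma escape_nonroot x : 1 < a x -> F.[x] != 0.
Proof.
move=> x1; apply/negP => /eqP Fx0.
have /(coprimep_root FG_coprime) Gx0 : root F x by apply/rootP.
case: (escape x1) => [/eqP|]; first by rewrite (negbTE Gx0).
by rewrite Fx0 mul0r (a0 Ha) ltNge ler01.
Qed.

Lemma escape_root_disc z : root F z -> a z <= 1.
Proof. by move=> Fz; rewrite leNgt; apply: contraL Fz => /escape_nonroot. Qed.

(* F = 0 would make f vanish outside the unit disc too. *)
Lemma escape_F_neq0 : F != 0.
Proof.
have [x x1] := exists_abs_gt Ha 1.
by apply: contra (escape_nonroot x1) => /eqP->; rewrite horner0.
Qed.

Lemma escape_abs_F x : 1 < a x -> a F.[x] = a (lead_coef F) * a x ^+ (size F).-1.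
Proof. exact: (abs_horner_far Ha escape_F_neq0 escape_root_disc). Qed.

Lemma escape_dominant x : 1 < a x -> a G.[x] < a F.[x].
Proof.
move=> x1; have Fx0 : 0 < a F.[x] by rewrite (a_gt0 Ha) escape_nonroot.
case: (escape x1) => [->|]; first by rewrite (a0 Ha).
have [->|Gx0] := eqVneq G.[x] 0; first by rewrite (a0 Ha).
by rewrite (aM Ha) (aV Ha) ltr_pdivlMr ?mul1r ?(a_gt0 Ha).
Qed.

(* Hence deg G <= deg F: otherwise |G(x)| > |F(x)| for |x| large. *)
Lemma escape_size : (size G <= size F)%N.
Proof.
rewrite leqNgt; apply/negP => szFG.
have G0 : G != 0 by rewrite -size_poly_gt0 (leq_ltn_trans _ szFG).
have szF0 : (0 < size F)%N by rewrite size_poly_gt0 escape_F_neq0.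
have [rb hrb] := roots_bounded Ha G0.
set lF := a (lead_coef F); set lG := a (lead_coef G).
have lG0 : 0 < lG by rewrite (a_gt0 Ha) lead_coef_eq0.
have [x] := exists_abs_gt Ha (Num.max (Num.max rb 1) (lF / lG)).
rewrite !gt_max => /andP[/andP[rbx x1] lFx].
have ax0 : 0 < a x := lt_trans ltr01 x1.
have := escape_dominant x1; apply/negP; rewrite -leNgt.
rewrite escape_abs_F // (abs_horner_far Ha G0 hrb rbx) -/lF -/lG.
apply: (@le_trans _ _ (lG * a x ^+ (size F).-1.+1)).
  by rewrite exprS mulrA ler_pM2r ?exprn_gt0 // ltW // mulrC -ltr_pdivrMr.
by rewrite ler_pM2l // ler_weXn2l ?(ltW x1) //; lia.
Qed.

Lemma escape_le1_disc x : rat_abs_le1 a F G x -> a x <= 1.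
Proof.
move=> [Gx0 fx_le1]; rewrite leNgt; apply/negP => /escape [/eqP|].
  by rewrite (negbTE Gx0).
by rewrite ltNge fx_le1.
Qed.

End Escape.

Section Perturbation.
Variables (R : realType) (K : fieldType) (a : K -> R).
Hypothesis Ha : complete_nonarch_abs a.

Lemma dominance_stable f g p q :
  a g < a f -> a (p - f) < a f -> a (q - g) < a f -> a q < a p.
Proof.
move=> gf pf qg; rewrite (a_close_eq Ha pf) -(subrK g q).
exact: aD_lt.
Qed.

Lemma ratio_stable f g p q (e gamma m : R) :
  a f <= a g -> m <= a g -> e < m -> e <= gamma * m ->
  a (p - f) < e -> a (q - g) < e -> q != 0 /\ a (p / q - f / g) < gamma.
Proof.
move=> fg mg em egm pf qg.
have e0 : 0 < e := le_lt_trans (a_ge0 Ha _) pf.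
have g0 : 0 < a g := lt_trans e0 (lt_le_trans em mg).
have qg_small : a (q - g) < a g := lt_trans qg (lt_le_trans em mg).
have aqg : a q = a g := a_close_eq Ha qg_small.
have q0 : q != 0 by rewrite -(a_gt0 Ha) aqg.
have g_ne0 : g != 0 by rewrite -(a_gt0 Ha).
split => //.
have -> : p / q - f / g = ((p - f) * g + - (f * (q - g))) / (q * g).
  by field; apply/andP.
rewrite (aM Ha) (aV Ha) !(aM Ha) aqg ltr_pdivrMr ?mulr_gt0 //.
have numerator_small : a ((p - f) * g + - (f * (q - g))) < e * a g.
  apply: (aD_lt Ha); rewrite ?(aN Ha) (aM Ha); first by rewrite ltr_pM2r.
  have := a_ge0 Ha f; have := a_ge0 Ha (q - g); nra.
have gamma0 : 0 < gamma.
  by rewrite -(pmulr_lgt0 _ (lt_trans e0 em)) (lt_le_trans e0 egm).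
apply: lt_le_trans numerator_small _; rewrite mulrA ler_pM2r //.
by apply: le_trans egm _; rewrite ler_pM2l.
Qed.

Definition near_rat (d : nat) (e : R) (F G F' G' : {poly K}) : Prop :=
  exists2 c : K, c != 0 &
    [/\ (size F' <= d.+1)%N, (size G' <= d.+1)%N &
        forall i : 'I_d.+1, a (c * F'`_i - F`_i) < e /\ a (c * G'`_i - G`_i) < e].

Lemma near_rat_refl d (e : R) (F G : {poly K}) : 0 < e ->
  (size F <= d.+1)%N -> (size G <= d.+1)%N -> near_rat d e F G F G.
Proof.
move=> e0 sF sG; exists 1; rewrite ?oner_neq0 //.
by split => // i; rewrite !mul1r !subrr (a0 Ha).
Qed.

(* The neighbourhood is invariant under rescaling and, by the ultrametric
   inequality, open: around a member with rescaling c, the coefficient ball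
   of radius e/|c| stays inside. *)
Lemma near_rat_open d (e : R) (F G : {poly K}) : proj_open a d (near_rat d e F G).
Proof.
split=> [c0 F1 G1 c00 [c c0' [s1 s2 h]] | F1 G1 [c c0 [s1 s2 h]]].
  exists (c / c0); first by rewrite mulf_neq0 ?invr_neq0.
  by rewrite !size_scale //; split => // i; rewrite !coefZ !mulrA divfK.
have e0 : 0 < e := le_lt_trans (a_ge0 Ha _) (h ord0).1.
have ac0 : 0 < a c by rewrite (a_gt0 Ha).
exists (e / a c) => [|F2 G2 s1' s2' h2]; first by rewrite divr_gt0.
exists c => //; split => // i.
have rescale_diff (u v w : K) : c * u - w = c * (u - v) + (c * v - w) by ring.
have [h1F h1G] := h i; have [h2F h2G] := h2 i.
rewrite (rescale_diff F2`_i F1`_i) (rescale_diff G2`_i G1`_i).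
by split; apply: (aD_lt Ha) => //; rewrite (aM Ha) mulrC -ltr_pdivlMr.
Qed.

Lemma near_rat_horner d (e : R) (F G F' G' : {poly K}) :
  (size F <= d.+1)%N -> (size G <= d.+1)%N -> near_rat d e F G F' G' ->
  exists2 c : K, c != 0 & forall x (r : R), 1 <= r -> a x <= r ->
    a (c * F'.[x] - F.[x]) < e * r ^+ d /\ a (c * G'.[x] - G.[x]) < e * r ^+ d.
Proof.
move=> sF sG [c c0 [sF' sG' h]]; exists c => // x r r1 xr.
have diff_small (P P' : {poly K}) : (size P <= d.+1)%N -> (size P' <= d.+1)%N ->
    (forall i : 'I_d.+1, a (c * P'`_i - P`_i) < e) ->
    a (c * P'.[x] - P.[x]) < e * r ^+ d.
  move=> sP sP' hP; rewrite -hornerZ -hornerN -hornerD.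
  apply: (abs_horner_lt Ha) => // [|i]; last by rewrite coefD coefN coefZ.
  apply: leq_trans (size_polyD _ _) _.
  by rewrite size_polyN geq_max sP (leq_trans (size_scale_leq _ _)).
by split; apply: diff_small => // i; case: (h i).
Qed.

Lemma rat_abs_gt1_of_lt (c : K) (F' G' : {poly K}) x :
  a (c * G'.[x]) < a (c * F'.[x]) -> rat_abs_gt1 a F' G' x.
Proof.
have [->|c0] := eqVneq c 0; first by rewrite !mul0r ltxx.
rewrite !(aM Ha) ltr_pM2l ?(a_gt0 Ha) // => GF.
have [|Gx0] := eqVneq G'.[x] 0; [by left | right].
by rewrite (aM Ha) (aV Ha) ltr_pdivlMr ?mul1r ?(a_gt0 Ha).
Qed.

Lemma rat_close_of_scaled (c : K) (gamma : R) (F G F' G' : {poly K}) x : c != 0 ->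
  c * G'.[x] != 0 /\ a (c * F'.[x] / (c * G'.[x]) - F.[x] / G.[x]) < gamma ->
  rat_close a gamma F G F' G' x.
Proof.
move=> c0 [cG0 close]; split; first by move: cG0; rewrite mulf_eq0 negb_or => /andP[].
by rewrite invfM mulrACA divff ?mul1r in close.
Qed.

End Perturbation.

Section Stability.
Variables (R : realType) (K : closedFieldType) (a : K -> R).
Hypothesis Ha : complete_nonarch_abs a.
Variables (F G : {poly K}) (d : nat) (e : R).
Hypothesis FG_coprime : coprimep F G.
Hypothesis escape : forall x, 1 < a x -> rat_abs_gt1 a F G x.
Hypotheses (szF : size F = d.+1) (szG : (size G <= d.+1)%N).

(* Part (a): for e < |lc F| every member of the neighbourhood still escapes,
   since off the unit disc the perturbation e |x|^d is below |F(x)|. *)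
Lemma near_rat_escape F' G' : e < a (lead_coef F) ->
  near_rat a d e F G F' G' -> forall x, 1 < a x -> rat_abs_gt1 a F' G' x.
Proof.
move=> eF /(near_rat_horner Ha (eq_leq szF) szG) [c _ close] x x1.
have [cF'_close cG'_close] := close x (a x) (ltW x1) (lexx _).
have ax_gt0 : 0 < a x := lt_trans ltr01 x1.
have small_vs_F : e * a x ^+ d < a F.[x].
  by rewrite (escape_abs_F Ha FG_coprime escape x1) szF ltr_pM2r ?exprn_gt0.
apply: (rat_abs_gt1_of_lt Ha (c := c)).
apply: (dominance_stable Ha (escape_dominant Ha FG_coprime escape x1)).
  exact: lt_trans cF'_close small_vs_F.
exact: lt_trans cG'_close small_vs_F.
Qed.

Lemma near_rat_close F' G' (m gamma : R) :
  (forall x, a x <= 1 -> m <= Num.max (a F.[x]) (a G.[x])) ->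
  e < m -> e <= gamma * m -> near_rat a d e F G F' G' ->
  forall x, rat_abs_le1 a F G x -> rat_close a gamma F G F' G' x.
Proof.
move=> disc_bound em egm /(near_rat_horner Ha (eq_leq szF) szG) [c c0 close].
move=> x fx_le1; have x1 := escape_le1_disc escape fx_le1.
have [cF'_close cG'_close] := close x 1 (lexx _) x1.
rewrite expr1n mulr1 in cF'_close cG'_close.
have FG : a F.[x] <= a G.[x].
  have [Gx0] := fx_le1; rewrite (aM Ha) (aV Ha) ler_pdivrMr ?mul1r //.
  by rewrite (a_gt0 Ha).
have mG : m <= a G.[x] by rewrite -(max_idPr FG) disc_bound.
apply: (rat_close_of_scaled c0).
exact: (ratio_stable Ha FG mG em egm cF'_close cG'_close).
Qed.

End Stability.

Theorem lemma5p6 (R : realType) (K : closedFieldType) (a : K -> R)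
  (Ha : complete_nonarch_abs a) (Hchar : [pchar K] =i pred0)
  (d : nat) (Hd : (2 <= d)%N) (F G : {poly K}) (Hf : rat_deg d F G)
  (Hesc : forall x : K, 1 < a x -> rat_abs_gt1 a F G x) :
  forall gamma : R, 0 < gamma ->
  exists W : {poly K} -> {poly K} -> Prop,
    [/\ proj_open a d W, W F G &
      forall F' G', rat_deg d F' G' -> W F' G' ->
        (forall x : K, 1 < a x -> rat_abs_gt1 a F' G' x) /\
        (forall x : K, rat_abs_le1 a F G x -> rat_close a gamma F G F' G' x)].
Proof.
move=> gamma gamma0; case: Hf => FG_coprime szFG.
have szF : size F = d.+1.
  by rewrite -szFG (maxn_idPl (escape_size Ha FG_coprime Hesc)).
have szG : (size G <= d.+1)%N by rewrite -szFG leq_maxr.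
have lF0 : 0 < a (lead_coef F).
  by rewrite (a_gt0 Ha) lead_coef_eq0 (escape_F_neq0 Ha FG_coprime Hesc).
have [m m0 disc_bound] := coprime_disc_lower_bound Ha FG_coprime.
pose mu := Num.min (a (lead_coef F)) (Num.min m (gamma * m)).
have mu0 : 0 < mu by rewrite !lt_min lF0 m0 mulr_gt0.
have [muF mum mugm] : [/\ mu <= a (lead_coef F), mu <= m & mu <= gamma * m].
  by rewrite !ge_min !lexx !orbT.
pose e := mu / 2.
have [e0 eF em egm] : [/\ 0 < e, e < a (lead_coef F), e < m & e <= gamma * m].
  by split; rewrite /e; lra.
exists (near_rat a d e F G); split.
- exact: near_rat_open.
- by apply: near_rat_refl; rewrite ?szF.
move=> F' G' _ near; split.
- exact: (near_rat_escape Ha FG_coprime Hesc szF szG eF).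
- exact: (near_rat_close Ha Hesc szF szG disc_bound em egm).
Qed.
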